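(* Let $S$ be the antipode of $C(q)$. Then for every $n\ge0$, $\mathrm{St}_n=(-1)^nS(1_{\mathfrak{gl}_n(\mathbb{F}_q)})$.
   Context: Let $q$ be a prime power, $C_n(q)$ the complex functions on $\mathfrak{gl}_n(\mathbb{F}_q)$ invariant under $\mathrm{GL}_n(\mathbb{F}_q)$-conjugation, and $C(q)=\bigoplus_nC_n(q)$ the connected graded Hopf algebra over $\mathbb{C}$ with multiplication given by Harish-Chandra induction from block-diagonal Levis $\mathfrak{gl}_k\times\mathfrak{gl}_l\subseteq\mathfrak{gl}_{k+l}$, co-multiplication on $C_n(q)$ given by $\sum_{k+l=n}$ of Harish-Chandra restrictions to $\mathfrak{gl}_k\times\mathfrak{gl}_l$, unit/co-unit the inclusion of/projection to $C_0(q)=\mathbb{C}$. The duality operation is $\mathcal{D}_n(f)=\sum_P(-1)^{r(P)}R^{\mathcal{G}_n}_{\mathcal{L}_P}{}^*R^{\mathcal{G}_n}_{\mathcal{L}_P}(f)$, summed over the $F$-stable parabolics containing a fixed $F$-stable Borel of $\mathrm{GL}_n$, with $\mathcal{L}_P$ the Lie algebra of an $F$-stable Levi of $P$ and $r(P)$ its semisimple $\mathbb{F}_q$-rank. $1_{\mathfrak{gl}_n(\mathbb{F}_q)}$ is the constant function $1$, and the Steinberg function is $\mathrm{St}_n:=\mathcal{D}_n(1_{\mathfrak{gl}_n(\mathbb{F}_q)})$. *)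

(* Finite field F = F_q (q = #|F|), complex values in algC. *)
From HB Require Import structures.
From mathcomp Require Import all_boot all_order all_algebra all_field.
Set Implicit Arguments. Unset Strict Implicit. Unset Printing Implicit Defensive.
Import GRing.Theory Num.Theory.
Local Open Scope ring_scope.

Section GLq.
Variable F : finFieldType.

(* Functions on gl_k x gl_l (= C_k (x) C_l) are curried functions.          *)
Definition Pset2 k l : {set 'M[F]_(k + l)} :=
  [set g | (g \in unitmx) && (dlsubmx g == 0)].

(* Harish-Chandra induction gl_k x gl_l -> gl_(k+l): the multiplication.   *)
Definition HCind2 k l (g : 'M[F]_k -> 'M[F]_l -> algC) (x : 'M[F]_(k + l))
  : algC :=
  (#|Pset2 k l|%:R)^-1 *
  \sum_(h : 'M[F]_(k + l) | (h \in unitmx) &&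
          (dlsubmx (invmx h *m x *m h) == 0))
     g (ulsubmx (invmx h *m x *m h)) (drsubmx (invmx h *m x *m h)).

Definition HCres2 k l (f : 'M[F]_(k + l) -> algC) (A : 'M[F]_k) (B : 'M[F]_l)
  : algC :=
  (#|{: 'M[F]_(k, l)}|%:R)^-1 *
  \sum_(Cm : 'M[F]_(k, l)) f (block_mx A Cm 0 B).

(* Components of the comultiplication C_n -> C_k (x) C_(n-k), and of the
   multiplication C_k (x) C_(n-k) -> C_n, for k <= n. *)
Definition coprod n k (hk : (k <= n)%N) (f : 'M[F]_n -> algC)
  : 'M[F]_k -> 'M[F]_(n - k) -> algC :=
  HCres2 (fun x => f (castmx (subnKC hk, subnKC hk) x)).

Definition prod n k (hk : (k <= n)%N) (g : 'M[F]_k -> 'M[F]_(n - k) -> algC)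
  : 'M[F]_n -> algC :=
  fun x => HCind2 g (castmx (esym (subnKC hk), esym (subnKC hk)) x).

(* Antipode of the connected graded bialgebra C(q): the unique linear S with
   m o (S (x) id) o Delta = eta o eps, i.e. S_0 = id and for n >= 1
   S_n f = - sum_{k < n} m_{k,n-k} ((S_k (x) id) (Delta_{k,n-k} f)).
   (S_k (x) id) acts on the first tensor factor. Defined with fuel >= n. *)
Fixpoint antipode_aux (fuel : nat) (n : nat) (f : 'M[F]_n -> algC)
  : 'M[F]_n -> algC :=
  match fuel with
  | 0 => f
  | fuel'.+1 =>
      if n == 0%N then f else
      fun x => - \sum_(k < n)
        prod (ltnW (ltn_ord k))
          (fun A B => antipode_aux fuel' (fun A' => coprod (ltnW (ltn_ord k)) f A' B) A)
          x
  end.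

Definition antipode n (f : 'M[F]_n -> algC) : 'M[F]_n -> algC :=
  antipode_aux n f.

(* Parabolics containing the upper triangular Borel <-> subsets I of the
   simple roots alpha_j (j : 'I_n.-1, between positions j and j+1).
   blk I i = index of the Levi block containing position i.            *)
Definition blk n (I : {set 'I_n.-1}) (i : 'I_n) : nat :=
  #|[set j : 'I_n.-1 | (j < i)%N && (j \notin I)]|.

Definition inParab n (I : {set 'I_n.-1}) (x : 'M[F]_n) : bool :=
  [forall i, [forall j, (blk I j < blk I i)%N ==> (x i j == 0)]].

Definition inNilrad n (I : {set 'I_n.-1}) (x : 'M[F]_n) : bool :=
  [forall i, [forall j, (blk I j <= blk I i)%N ==> (x i j == 0)]].

Definition leviProj n (I : {set 'I_n.-1}) (x : 'M[F]_n) : 'M[F]_n :=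
  \matrix_(i, j) if blk I i == blk I j then x i j else 0.

Definition ParabGrp n (I : {set 'I_n.-1}) : {set 'M[F]_n} :=
  [set g | (g \in unitmx) && inParab I g].

(* Functions on l_I are represented as functions on gl_n, only ever
   evaluated on l_I. *)
Definition HCind n (I : {set 'I_n.-1}) (f : 'M[F]_n -> algC) (x : 'M[F]_n)
  : algC :=
  (#|ParabGrp I|%:R)^-1 *
  \sum_(g : 'M[F]_n | (g \in unitmx) && inParab I (invmx g *m x *m g))
     f (leviProj I (invmx g *m x *m g)).

Definition HCres n (I : {set 'I_n.-1}) (f : 'M[F]_n -> algC) (y : 'M[F]_n)
  : algC :=
  (#|[set v : 'M[F]_n | inNilrad I v]|%:R)^-1 *
  \sum_(v : 'M[F]_n | inNilrad I v) f (y + v).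

(* r(P_I) = semisimple rank of the Levi = #|I| *)
Definition duality n (f : 'M[F]_n -> algC) (x : 'M[F]_n) : algC :=
  \sum_(I : {set 'I_n.-1}) (-1) ^+ #|I| * HCind I (HCres I f) x.

Definition one_gl n : 'M[F]_n -> algC := fun _ => 1.

Definition Steinberg n : 'M[F]_n -> algC := duality (@one_gl n).

End GLq.

(* Harish-Chandra restriction fixes constant functions, so
   St_n = sum_I (-1)^|I| R_I(1), where R_I is Harish-Chandra induction from the
   Levi of the standard parabolic attached to a set I of simple roots.  Put
   T_n := sum_I (-1)^(n - |I|) R_I(1); then St_n = (-1)^n T_n, and it suffices
   to show that T satisfies the recursion defining S(1).  Since the coproduct of
   1 is 1 (x) 1, that recursion reads T_n = - sum_(k < n) T_k * 1_(n-k).  Grouping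
   the sets I by the start k of their last Levi block, transitivity of
   Harish-Chandra induction identifies the k-th group with -(T_k * 1_(n-k)). *)

From mathcomp Require Import all_boot all_order all_algebra all_field.
From mathcomp Require Import zify.
From Stdlib Require Import FunctionalExtensionality.
Import GRing.Theory Num.Theory.
Set Implicit Arguments. Unset Strict Implicit. Unset Printing Implicit Defensive.
Local Open Scope ring_scope.

(* The standard parabolic of gl_n whose Levi is the Levi of [I'] in gl_k
   followed by one block gl_(n-k). *)
Definition ext_roots (n k : nat) (I' : {set 'I_k.-1}) : {set 'I_n.-1} :=
  [set j : 'I_n.-1 | [exists j' in I', (j' : nat) == j] || (k <= j)%N].
Arguments ext_roots n k I' : clear implicits.

Definition restr_roots (n k : nat) (I : {set 'I_n.-1}) : {set 'I_k.-1} :=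
  [set j' : 'I_k.-1 | [exists j in I, (j : nat) == j']].
Arguments restr_roots n k I : clear implicits.

Definition last_blk_start n' (I : {set 'I_n'}) : 'I_n'.+1 :=
  inord (\max_(j in ~: I) (j : nat).+1)%N.

Section BlkExtRoots.
Variables (k l : nat) (I' : {set 'I_k.-1}).
Local Notation E := (ext_roots (k + l) k I').

Lemma blk_ext_lshift (i : 'I_k) : blk E (lshift l i) = blk I' i.
Proof.
have le : (k.-1 <= (k + l).-1)%N by lia.
have winj : injective (widen_ord le) by move=> a b /(congr1 val) /= /val_inj.
rewrite /blk -(card_imset _ winj); apply: eq_card => j; apply/idP/idP.
- rewrite inE => /andP[ji jE].
  have jk : (j < k.-1)%N by have := ltn_ord i; rewrite /= in ji; lia.
  apply/imsetP; exists (Ordinal jk); last exact: val_inj.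
  rewrite inE /= ji /=; apply: contra jE => jI.
  by rewrite inE; apply/orP; left; apply/existsP; exists (Ordinal jk); rewrite jI /=.
- case/imsetP => j'; rewrite inE => /andP[ji nI] ->.
  rewrite inE /= ji /= inE negb_or -ltnNge; apply/andP; split; last first.
    by rewrite /=; have := ltn_ord j'; lia.
  apply/existsP => -[j'' /andP[j''I /eqP /val_inj ej'']].
  by rewrite -ej'' j''I in nI.
Qed.

Lemma blk_ext_lshift_lt_rshift (i : 'I_k) (j : 'I_l) :
  (blk E (lshift l i) < blk E (rshift k j))%N.
Proof.
have ck : (k.-1 < (k + l).-1)%N by have := ltn_ord i; have := ltn_ord j; lia.
rewrite /blk; apply: proper_card; apply/properP; split.
- apply/subsetP => x; rewrite !inE /= => /andP[xi ->]; rewrite andbT.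
  by have := ltn_ord i; lia.
- exists (Ordinal ck); rewrite !inE /= ?negb_or; last by have := ltn_ord i; lia.
  apply/and3P; split; try by have := ltn_ord i; lia.
  by apply/existsP => -[j'' /andP[_ /eqP e]]; have := ltn_ord j''; lia.
Qed.

Lemma blk_ext_rshift (i j : 'I_l) : blk E (rshift k i) = blk E (rshift k j).
Proof.
rewrite /blk; apply: eq_card => x; rewrite !inE /=.
have [kx | xk] := leqP k x; first by rewrite orbT !andbF.
by rewrite orbF (_ : (x < k + i)%N) 1?(_ : (x < k + j)%N) //; lia.
Qed.

End BlkExtRoots.

Lemma last_blk_start_le n' (I : {set 'I_n'}) : (\max_(j in ~: I) (j : nat).+1 <= n')%N.
Proof. by apply/bigmax_leqP => j _; exact: ltn_ord. Qed.

Lemma last_blk_start_ext n' (k : 'I_n'.+1) (I' : {set 'I_k.-1}) :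
  last_blk_start (ext_roots n'.+1 k I') = k.
Proof.
apply: val_inj; rewrite /= inordK ?ltnS ?last_blk_start_le //.
apply/eqP; rewrite eqn_leq; apply/andP; split.
  apply/bigmax_leqP => j; rewrite in_setC inE negb_or => /andP[_].
  by rewrite -ltnNge.
have [k0 | kpos] := posnP k; first by rewrite {1}k0.
have ck : (k.-1 < n')%N by have := ltn_ord k; lia.
have ck_out : Ordinal ck \in ~: ext_roots n'.+1 k I'.
  rewrite in_setC inE negb_or /= -ltnNge; apply/andP; split; last by lia.
  by apply/existsP => -[j'' /andP[_ /eqP e]]; have := ltn_ord j''; lia.
by apply: leq_trans (leq_bigmax_cond _ ck_out) => /=; lia.
Qed.

Lemma restr_ext_roots n k (I' : {set 'I_k.-1}) :
  (k <= n)%N -> restr_roots n k (ext_roots n k I') = I'.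
Proof.
move=> kn; apply/setP => j'; rewrite inE; apply/existsP/idP.
- case=> j /andP[]; rewrite inE => /orP[/existsP[j'' /andP[j''I /eqP e]] | kj] /eqP jj'.
    by rewrite (_ : j' = j'') //; apply: val_inj; rewrite /= -jj' e.
  by have := ltn_ord j'; lia.
- move=> j'I; have jn : (j' < n.-1)%N by have := ltn_ord j'; lia.
  exists (Ordinal jn); rewrite /= eqxx andbT inE; apply/orP; left.
  by apply/existsP; exists j'; rewrite j'I eqxx.
Qed.

Lemma last_blk_startE n' (I : {set 'I_n'}) :
  last_blk_start I = (\max_(j in ~: I) (j : nat).+1)%N :> nat.
Proof. by rewrite /= inordK // ltnS last_blk_start_le. Qed.

Lemma mem_ge_last_blk_start n' (I : {set 'I_n'}) (j : 'I_n') :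
  (last_blk_start I <= j)%N -> j \in I.
Proof.
rewrite last_blk_startE => lej; apply: contraT; rewrite -in_setC => jI.
by have := @leq_bigmax_cond _ _ (fun j : 'I_n' => (j : nat).+1) _ jI; rewrite ltnNge lej.
Qed.

Lemma last_blk_start_notin n' (I : {set 'I_n'}) :
  (0 < last_blk_start I)%N ->
  exists2 j : 'I_n', j \notin I & j.+1 = last_blk_start I.
Proof.
rewrite last_blk_startE => kpos.
have compl_nonempty : (0 < #|~: I|)%N.
  by rewrite lt0n cards_eq0; apply: contraTneq kpos => ->; rewrite big_set0.
have [j jI ->] := eq_bigmax_cond (fun j : 'I_n' => (j : nat).+1) compl_nonempty.
by exists j; rewrite -?in_setC.
Qed.

Lemma ext_restr_roots n' (I : {set 'I_n'}) (k := last_blk_start I) :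
  ext_roots n'.+1 k (restr_roots n'.+1 k I) = I.
Proof.
apply/setP => j; rewrite !inE.
have [kj | jk] := leqP k j; first by rewrite orbT mem_ge_last_blk_start.
rewrite orbF; have [jk1 | jk1] := ltnP j k.-1.
  apply/existsP/idP => [[j' /andP[]] | jI].
    rewrite inE => /existsP[j0 /andP[j0I /eqP e]] /eqP jj'.
    by rewrite (_ : j = j0) //; apply: val_inj; rewrite /= e jj'.
  exists (Ordinal jk1); rewrite /= eqxx andbT inE.
  by apply/existsP; exists j; rewrite jI eqxx.
have [|j0 j0I kE] := last_blk_start_notin (I := I); first by rewrite -/k; lia.
have -> : j = j0 by apply: ord_inj; move: kE jk jk1; rewrite -/k /=; lia.
rewrite (negbTE j0I); apply/existsP => -[j' /andP[_ /eqP e]].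
by move: kE (ltn_ord j') e; rewrite -/k /=; lia.
Qed.

Lemma card_geq m k : #|[set j : 'I_m | (k <= j)%N]| = (m - k)%N.
Proof.
rewrite -sum1dep_card.
have := @big_geq_mkord _ 0%N addn k m (fun _ => true) (fun _ => 1%N).
by rewrite sum_nat_const_nat muln1 => ->; apply: eq_bigl.
Qed.

Lemma card_ext_roots n k (I' : {set 'I_k.-1}) : (k <= n)%N ->
  #|ext_roots n k I'| = (#|I'| + (n.-1 - k))%N.
Proof.
move=> kn; have le : (k.-1 <= n.-1)%N by lia.
have winj : injective (widen_ord le) by move=> a b /(congr1 val) /= /val_inj.
have -> : ext_roots n k I' = (widen_ord le @: I') :|: [set j : 'I_n.-1 | (k <= j)%N].
  apply/setP => j; rewrite !inE; congr (_ || _); apply/existsP/imsetP.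
    by case=> j' /andP[j'I /eqP e]; exists j' => //; apply: val_inj.
  by case=> j' j'I ->; exists j'; rewrite j'I eqxx.
rewrite cardsU card_imset // card_geq (_ : _ :&: _ = set0) ?cards0 ?subn0 //.
apply/setP => j; rewrite !inE; apply/negP => /andP[/imsetP[j' _ ->]] /=.
by have := ltn_ord j'; lia.
Qed.

Section UnitMatrices.
Variable R : comUnitRingType.

Lemma invmx_mul n (A B : 'M[R]_n) : A \in unitmx -> B \in unitmx ->
  invmx (A *m B) = invmx B *m invmx A.
Proof.
move=> Au Bu; have ABu : A *m B \in unitmx by rewrite unitmx_mul Au Bu.
have ABK : A *m B *m (invmx B *m invmx A) = 1%:M.
  by rewrite mulmxA -(mulmxA A) mulmxV // mulmx1 mulmxV.
by rewrite -[LHS]mulmx1 -ABK mulmxA mulVmx // mul1mx.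
Qed.

Lemma mulmx_unit_eq0 m k (A : 'M[R]_(m, k)) g : g \in unitmx -> (A *m g == 0) = (A == 0).
Proof.
move=> gu; apply/eqP/eqP => [|->]; last by rewrite mul0mx.
by move/(congr1 (mulmx^~ (invmx g))); rewrite mulmxK // mul0mx.
Qed.

End UnitMatrices.

Lemma sum1_pred_neq0 (T : finType) (P : pred T) x : P x -> \sum_(t | P t) (1 : algC) != 0.
Proof. by move=> Px; rewrite sumr_const pnatr_eq0 -lt0n; apply/card_gt0P; exists x. Qed.

Section Induction.
Variable F : finFieldType.

Lemma HCind_one n (I : {set 'I_n.-1}) x :
  HCind I (@one_gl F n) x =
  (\sum_(p : 'M[F]_n | (p \in unitmx) && inParab I p) (1 : algC))^-1 *
  \sum_(g : 'M[F]_n | (g \in unitmx) && inParab I (invmx g *m x *m g)) (1 : algC).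
Proof. by rewrite /HCind /ParabGrp -sum1dep_card natr_sum. Qed.

Section ExtRoots.
Variables (k l : nat) (I' : {set 'I_k.-1}).
Local Notation E := (ext_roots (k + l) k I').

Lemma inParab_ext_roots (w : 'M[F]_(k + l)) :
  inParab E w = (dlsubmx w == 0) && inParab I' (ulsubmx w).
Proof.
apply/idP/andP => [/forallP Hw | [/eqP dl0 /forallP Hul]].
  split.
    apply/eqP/matrixP => i j; rewrite !mxE.
    by have := forallP (Hw (rshift k i)) (lshift l j); rewrite blk_ext_lshift_lt_rshift => /eqP.
  apply/forallP => i; apply/forallP => j; apply/implyP => hij; rewrite !mxE.
  by have := forallP (Hw (lshift l i)) (lshift l j); rewrite !blk_ext_lshift hij.
apply/forallP => i; apply/forallP => j; apply/implyP.
rewrite -(splitK i) -(splitK j); case: (split i) => i'; case: (split j) => j' /=.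
- by rewrite !blk_ext_lshift => hij; have := forallP (Hul i') j'; rewrite hij !mxE.
- by rewrite ltnNge (ltnW (blk_ext_lshift_lt_rshift _ _ _)).
- by move=> _; have := congr1 (fun M : 'M[F]_(l, k) => M i' j') dl0; rewrite !mxE => ->.
- by rewrite (blk_ext_rshift _ j' i') ltnn.
Qed.

Definition embed_ul (g : 'M[F]_k) : 'M[F]_(k + l) := block_mx g 0 0 1%:M.

Lemma unitmx_embed_ul g : g \in unitmx -> embed_ul g \in unitmx.
Proof. by move=> gu; rewrite /embed_ul block_diag_mx_unit gu unitmx1. Qed.

Lemma invmx_embed_ul g : g \in unitmx -> invmx (embed_ul g) = embed_ul (invmx g).
Proof.
by move=> gu; rewrite /embed_ul invmx_block_diag ?invmx1 // -/(embed_ul g) unitmx_embed_ul.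
Qed.

Lemma mulmx_embed_ul (p : 'M[F]_(k + l)) g :
  p *m embed_ul g = block_mx (ulsubmx p *m g) (ursubmx p) (dlsubmx p *m g) (drsubmx p).
Proof.
rewrite -{1}[p]submxK /embed_ul mulmx_block.
by rewrite !(mulmx0, mul0mx, addr0, add0r, mulmx1, mul1mx).
Qed.

Lemma conjmx_embed_ul (z : 'M[F]_(k + l)) g :
  embed_ul (invmx g) *m z *m embed_ul g =
  block_mx (invmx g *m ulsubmx z *m g) (invmx g *m ursubmx z) (dlsubmx z *m g) (drsubmx z).
Proof.
rewrite -[z in LHS]submxK /embed_ul !mulmx_block.
by rewrite !(mulmx0, mul0mx, addr0, add0r, mulmx1, mul1mx).
Qed.

Lemma inParab_ext_roots_mulmx (p : 'M[F]_(k + l)) g : g \in unitmx ->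
  inParab E (p *m embed_ul g) = (dlsubmx p == 0) && inParab I' (ulsubmx p *m g).
Proof.
by move=> gu; rewrite mulmx_embed_ul inParab_ext_roots block_mxKdl block_mxKul mulmx_unit_eq0.
Qed.

Lemma inParab_ext_roots_conj (y h : 'M[F]_(k + l)) g : h \in unitmx -> g \in unitmx ->
  inParab E (invmx (h *m embed_ul g) *m y *m (h *m embed_ul g)) =
  (dlsubmx (invmx h *m y *m h) == 0) &&
  inParab I' (invmx g *m ulsubmx (invmx h *m y *m h) *m g).
Proof.
move=> hu gu; rewrite invmx_mul ?unitmx_embed_ul // invmx_embed_ul //.
rewrite (_ : _ *m y *m _ = embed_ul (invmx g) *m (invmx h *m y *m h) *m embed_ul g);
  last by rewrite !mulmxA.
by rewrite conjmx_embed_ul inParab_ext_roots block_mxKdl block_mxKul mulmx_unit_eq0.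
Qed.

Lemma embed_ul_mulmx_inj g : g \in unitmx -> injective (fun p : 'M[F]_(k + l) => p *m embed_ul g).
Proof. by move=> gu; apply: can_inj (mulmxK (unitmx_embed_ul gu)). Qed.

(* Both sides count the pairs (h, g) through (h, g) |-> h * embed_ul g. *)
Lemma count_conj_ext_roots (y : 'M[F]_(k + l)) :
  \sum_(h | (h \in unitmx) && (dlsubmx (invmx h *m y *m h) == 0))
    \sum_(g : 'M[F]_k | (g \in unitmx) &&
        inParab I' (invmx g *m ulsubmx (invmx h *m y *m h) *m g)) (1 : algC)
  = (\sum_(g : 'M[F]_k | g \in unitmx) (1 : algC)) *
    \sum_(h : 'M_(k + l) | (h \in unitmx) && inParab E (invmx h *m y *m h)) 1.
Proof.
rewrite big_mkcondr /=.
transitivity (\sum_(h | h \in unitmx) \sum_(g : 'M[F]_k | g \in unitmx)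
  (if inParab E (invmx (h *m embed_ul g) *m y *m (h *m embed_ul g)) then (1 : algC) else 0)).
  apply: eq_bigr => h hu; case: eqP => [dl0 | /eqP/negbTE dl0].
    by rewrite big_mkcondr; apply: eq_bigr => g gu; rewrite inParab_ext_roots_conj // dl0 eqxx.
  by apply/esym/big1 => g gu; rewrite inParab_ext_roots_conj // dl0.
rewrite exchange_big /= mulr_suml; apply: eq_bigr => g gu.
rewrite mul1r -big_mkcondr /= [RHS](reindex_inj (embed_ul_mulmx_inj gu)) /=.
by apply: eq_bigl => h; rewrite unitmx_mul unitmx_embed_ul // andbT.
Qed.

Lemma count_parab_ext_roots :
  (\sum_(g : 'M[F]_k | g \in unitmx) (1 : algC)) *
  (\sum_(p : 'M[F]_(k + l) | (p \in unitmx) && inParab E p) (1 : algC)) =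
  (\sum_(p : 'M[F]_(k + l) | (p \in unitmx) && (dlsubmx p == 0)) (1 : algC)) *
  (\sum_(g : 'M[F]_k | (g \in unitmx) && inParab I' g) (1 : algC)).
Proof.
rewrite mulr_suml.
transitivity (\sum_(g : 'M[F]_k | g \in unitmx) \sum_(p : 'M[F]_(k + l) | p \in unitmx)
   (if (dlsubmx p == 0) && inParab I' (ulsubmx p *m g) then (1 : algC) else 0)).
  apply: eq_bigr => g gu; rewrite mul1r (reindex_inj (embed_ul_mulmx_inj gu)) /= -big_mkcondr.
  by apply: eq_bigl => p; rewrite unitmx_mul unitmx_embed_ul // andbT inParab_ext_roots_mulmx.
rewrite exchange_big /= mulr_suml big_mkcondr /=; apply: eq_bigr => p pu.
case: eqP => dl0 /=; last by apply: big1.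
have ulu : ulsubmx p \in unitmx.
  move: pu; rewrite -[p]submxK dl0 !unitmxE det_ublock unitrM block_mxKul.
  by case/andP.
rewrite mul1r -big_mkcondr /= (reindex_inj (can_inj (mulKVmx ulu))) /=.
by apply: eq_bigl => g; rewrite unitmx_mul unitmx_inv ulu /= mulKVmx.
Qed.

Lemma HCind2_HCind_one (y : 'M[F]_(k + l)) :
  HCind2 (fun A (_ : 'M[F]_l) => HCind I' (@one_gl F k) A) y = HCind E (@one_gl F (k + l)) y.
Proof.
rewrite /HCind2 /Pset2 -sum1dep_card natr_sum /=.
under [X in _ * X]eq_bigr => h _ do rewrite HCind_one.
rewrite -mulr_sumr count_conj_ext_roots HCind_one !mulrA; congr (_ * _).
have GLk_neq0 : \sum_(g : 'M[F]_k | g \in unitmx) (1 : algC) != 0.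
  by apply: (sum1_pred_neq0 (x := 1%:M)); rewrite unitmx1.
by rewrite -invfM -count_parab_ext_roots invfM mulrAC mulVf // mul1r.
Qed.

End ExtRoots.
End Induction.

Section Antipode.
Variable F : finFieldType.

Definition alt_HCind_one n (x : 'M[F]_n) : algC :=
  \sum_(I : {set 'I_n.-1}) (-1) ^+ (n - #|I|) * HCind I (@one_gl F n) x.

Lemma sign_ext_roots n' (k : 'I_n'.+1) (I' : {set 'I_k.-1}) :
  (-1) ^+ (n'.+1 - #|ext_roots n'.+1 k I'|) = - (-1) ^+ (k - #|I'|) :> algC.
Proof.
rewrite card_ext_roots 1?ltnW //; have := max_card I'; rewrite card_ord => leI'.
have := ltn_ord k => ltk.
by rewrite (_ : (_ - _ = (k - #|I'|).+1)%N) ?exprS ?mulN1r //; lia.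
Qed.

Lemma HCind_one_castmx k (I' : {set 'I_k.-1}) n m (e : n = m) (x : 'M[F]_n) :
  HCind (ext_roots m k I') (@one_gl F m) (castmx (e, e) x) =
  HCind (ext_roots n k I') (@one_gl F n) x.
Proof. by case: m / e; rewrite castmx_id. Qed.

Lemma HCind2_sum k l (J : finType) (c : J -> algC) (f : J -> 'M[F]_k -> 'M[F]_l -> algC) y :
  HCind2 (fun A B => \sum_j c j * f j A B) y = \sum_j c j * HCind2 (f j) y.
Proof.
rewrite /HCind2 exchange_big mulr_sumr; apply: eq_bigr => j _.
by rewrite [RHS]mulrCA [in RHS]mulr_sumr.
Qed.

Lemma prod_alt_HCind_one n k (hk : (k <= n)%N) (x : 'M[F]_n) :
  prod hk (fun A (_ : 'M[F]_(n - k)) => alt_HCind_one A) x =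
  \sum_(I' : {set 'I_k.-1}) (-1) ^+ (k - #|I'|) * HCind (ext_roots n k I') (@one_gl F n) x.
Proof.
rewrite /prod /alt_HCind_one HCind2_sum; apply: eq_bigr => I' _.
by rewrite HCind2_HCind_one HCind_one_castmx.
Qed.

(* Splitting the sum over I by the start k of its last Levi block. *)
Lemma alt_HCind_one_rec n' (x : 'M[F]_n'.+1) :
  alt_HCind_one x = - \sum_(k < n'.+1)
    prod (ltnW (ltn_ord k)) (fun A (_ : 'M[F]_(n'.+1 - k)) => alt_HCind_one A) x.
Proof.
under [X in _ = - X]eq_bigr => k _ do rewrite prod_alt_HCind_one.
rewrite /alt_HCind_one (partition_big (@last_blk_start n') predT) //= -sumrN.
apply: eq_bigr => k _.
rewrite (reindex_onto (ext_roots n'.+1 k) (restr_roots n'.+1 k)) /=; last first.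
  by move=> I /eqP <-; apply: ext_restr_roots.
rewrite (eq_bigl predT) => [|I']; last first.
  by rewrite last_blk_start_ext restr_ext_roots ?eqxx // ltnW.
by rewrite -sumrN; apply: eq_bigr => I' _; rewrite sign_ext_roots mulNr.
Qed.

Lemma alt_HCind_one0 (x : 'M[F]_0) : alt_HCind_one x = 1.
Proof.
have parab0 (I : {set 'I_0.-1}) (w : 'M[F]_0) : inParab I w by apply/forallP => -[].
rewrite /alt_HCind_one (big_pred1 set0) => [|I]; last first.
  by apply/esym/eqP/setP => -[].
rewrite sub0n expr0 mul1r HCind_one.
rewrite [X in _ * X](eq_bigl (fun g : 'M[F]_0 => (g \in unitmx) && inParab set0 g)) => [|g].
  by rewrite mulVf // (sum1_pred_neq0 (x := 1%:M)) // unitmx1 parab0.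
by rewrite !parab0.
Qed.

Lemma HCres_one n (I : {set 'I_n.-1}) : HCres I (@one_gl F n) = @one_gl F n.
Proof.
apply: functional_extensionality => y.
rewrite /HCres /one_gl -sum1dep_card natr_sum mulVf //.
apply: (sum1_pred_neq0 (x := 0)).
by apply/forallP => i; apply/forallP => j; rewrite mxE eqxx implybT.
Qed.

Lemma coprod_one n k (hk : (k <= n)%N) A B : coprod hk (@one_gl F n) A B = 1.
Proof.
rewrite /coprod /HCres2 /one_gl sumr_const mulVf // pnatr_eq0 -lt0n.
by apply/card_gt0P; exists 0.
Qed.

Lemma antipode_aux_one_gl fuel n (x : 'M[F]_n) : (n <= fuel)%N ->
  antipode_aux fuel (@one_gl F n) x = alt_HCind_one x.
Proof.
elim: fuel n x => [|fuel IH] [|n'] x //= le_n_fuel; rewrite ?alt_HCind_one0 //.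
rewrite alt_HCind_one_rec; congr (- _); apply: eq_bigr => k _; congr prod.
apply: functional_extensionality => A; apply: functional_extensionality => B.
rewrite (_ : (fun A' => _) = @one_gl F k); last first.
  by apply: functional_extensionality => A'; rewrite coprod_one.
by apply: IH; have := ltn_ord k; lia.
Qed.

End Antipode.

Theorem mainTheorem9 (F : finFieldType) (n : nat) (x : 'M[F]_n) :
  Steinberg x = (-1) ^+ n * antipode (@one_gl F n) x.
Proof.
rewrite /antipode antipode_aux_one_gl // /Steinberg /duality /alt_HCind_one mulr_sumr.
apply: eq_bigr => I _; rewrite HCres_one mulrA -exprD; congr (_ * _).
have := max_card I; rewrite card_ord => leI.
rewrite (_ : (n + (n - #|I|) = #|I| + (n - #|I|) * 2)%N); last by lia.
by rewrite exprD exprM sqrr_sign mulr1.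
Qed.
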